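(* Let $k\ge1$, $\lambda>0$, $0<\theta<1$, $F(x,y,\theta)=\frac{1+x+\theta y}{1+x+y}$. Suppose the system $( * )$: $z^-_1=\lambda F(z^-_1,z^+_2,\theta)^k$, $z^+_1=\lambda F(z^+_1,z^-_2,\theta)^k$, $z^-_2=\lambda F(z^-_2,z^+_1,\theta)^k$, $z^+_2=\lambda F(z^+_2,z^-_1,\theta)^k$ has exactly one solution in $(0,\infty)^4$. Then the system $( ** )$: $z_{1,i}=\lambda\prod_{j\in S(i)}F(z_{1,j},z_{2,j},\theta)$, $z_{2,i}=\lambda\prod_{j\in S(i)}F(z_{2,j},z_{1,j},\theta)$ for all $i\in\mathbb{T}^k$, has exactly one positive solution $(z_{1,i},z_{2,i})_{i\in\mathbb{T}^k}$; this solution does not depend on $i$, and its common value is the unique positive solution $(x,y)$ of $x=\lambda F(x,y,\theta)^k$, $y=\lambda F(y,x,\theta)^k$.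
   Context: $\mathbb{T}^k$ is the rooted Cayley tree of order $k$; $S(i)$ is the set of the $k$ direct successors of vertex $i$. *)

From Stdlib Require Import Reals Lra Lia List.
Import ListNotations.
Open Scope R_scope.

Definition F (x y theta : R) : R := (1 + x + theta * y) / (1 + x + y).

(* Vertices of the rooted Cayley tree T^k: finite words over {0,...,k-1};
   the root is the empty word, and the direct successors of i are i++[j], j<k. *)
Definition is_vertex (k : nat) (v : list nat) : Prop :=
  Forall (fun a => (a < k)%nat) v.

(* product over j in {0,...,k-1} of f j, i.e. over the successors S(i) *)
Definition prod_succ (k : nat) (f : nat -> R) : R :=
  fold_right Rmult 1 (map f (seq 0 k)).

Definition sys4_pos_sol (k : nat) (lam theta z1m z1p z2m z2p : R) : Prop :=
  0 < z1m /\ 0 < z1p /\ 0 < z2m /\ 0 < z2p /\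
  z1m = lam * (F z1m z2p theta) ^ k /\
  z1p = lam * (F z1p z2m theta) ^ k /\
  z2m = lam * (F z2m z1p theta) ^ k /\
  z2p = lam * (F z2p z1m theta) ^ k.

Definition sys2_pos_sol (k : nat) (lam theta x y : R) : Prop :=
  0 < x /\ 0 < y /\
  x = lam * (F x y theta) ^ k /\
  y = lam * (F y x theta) ^ k.

Definition tree_pos_sol (k : nat) (lam theta : R) (z1 z2 : list nat -> R) : Prop :=
  forall i, is_vertex k i ->
    0 < z1 i /\ 0 < z2 i /\
    z1 i = lam * prod_succ k (fun j => F (z1 (i ++ [j])) (z2 (i ++ [j])) theta) /\
    z2 i = lam * prod_succ k (fun j => F (z2 (i ++ [j])) (z1 (i ++ [j])) theta).

(* Starting from the trivial bounds 0 <= z <= lam, apply the map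
   G(x, y) = lam F(x, y, theta)^k, which is increasing in x and decreasing in y, to a
   lower and an upper bound for each of the two coordinates, always pairing a lower bound
   with the opposite upper bound.  The four bound sequences are monotone, and their limits
   (l1, u1, l2, u2) solve ( * ).  So does (u1, l1, u2, l2), hence uniqueness forces l1 = u1
   and l2 = u2.  Every solution of ( ** ) lies between the n-th bounds at every vertex, so it
   is squeezed onto the constant (l1, l2); and every solution (x, y) of the two-dimensional
   system yields the solution (x, x, y, y) of ( * ). *)
From Stdlib Require Import Reals List Lra Lia Psatz.
From Coquelicot Require Import Coquelicot.
Import ListNotations.
Open Scope R_scope.

Lemma fold_right_Rmult_map_le (l : list nat) (f g : nat -> R) :
  (forall j, In j l -> 0 <= f j <= g j) ->
  0 <= fold_right Rmult 1 (map f l) <= fold_right Rmult 1 (map g l).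
Proof.
  induction l as [|a l IH]; simpl; intros H; [lra|].
  destruct IH as [h1 h2]; [intros; apply H; auto|].
  destruct (H a (or_introl eq_refl)).
  split; [apply Rmult_le_pos | apply Rmult_le_compat]; auto.
Qed.

Lemma prod_succ_le (k : nat) (f g : nat -> R) :
  (forall j, (j < k)%nat -> 0 <= f j <= g j) -> prod_succ k f <= prod_succ k g.
Proof.
  intros H. apply fold_right_Rmult_map_le.
  intros j Hj. apply in_seq in Hj. apply H. lia.
Qed.

Lemma prod_succ_const (k : nat) (c : R) : prod_succ k (fun _ => c) = c ^ k.
Proof.
  unfold prod_succ. rewrite <- (length_seq k 0) at 2.
  induction (seq 0 k) as [|a l IH]; simpl; congruence.
Qed.

Lemma is_vertex_succ (k : nat) (i : list nat) (j : nat) :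
  is_vertex k i -> (j < k)%nat -> is_vertex k (i ++ [j]).
Proof. intros Hi Hj. apply Forall_app. auto. Qed.

Lemma is_lim_seq_pow (u : nat -> R) (l : R) (n : nat) :
  is_lim_seq u l -> is_lim_seq (fun m => u m ^ n) (l ^ n).
Proof.
  intros H. induction n; simpl.
  - apply is_lim_seq_const.
  - apply (is_lim_seq_mult' u (fun m => u m ^ n)); auto.
Qed.

Lemma is_lim_seq_squeeze_const (lo hi : nat -> R) (l z : R) :
  (forall m, lo m <= z <= hi m) -> is_lim_seq lo l -> is_lim_seq hi l -> z = l.
Proof.
  intros Hb Hlo Hhi.
  assert (Hz : is_lim_seq (fun _ => z) l) by (apply (is_lim_seq_le_le lo _ hi); auto).
  apply (is_lim_seq_unique _ _) in Hz. rewrite Lim_seq_const in Hz.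
  now injection Hz.
Qed.

Lemma is_lim_seq_nonneg (u : nat -> R) (l : R) :
  (forall n, 0 <= u n) -> is_lim_seq u l -> 0 <= l.
Proof. intros Hn Hl. exact (is_lim_seq_le (fun _ => 0) u 0 l Hn (is_lim_seq_const 0) Hl). Qed.

Section Iteration.
Variables (k : nat) (lam theta : R).
Hypothesis lam_gt0 : 0 < lam.
Hypothesis theta_ge0 : 0 <= theta.
Hypothesis theta_le1 : theta <= 1.

Lemma F_gt0 x y : 0 <= x -> 0 <= y -> 0 < F x y theta.
Proof. intros; unfold F. apply Rdiv_lt_0_compat; nra. Qed.

Lemma F_le1 x y : 0 <= x -> 0 <= y -> F x y theta <= 1.
Proof.
  intros; unfold F. apply Rmult_le_reg_r with (1 + x + y); [lra|].
  field_simplify; nra.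
Qed.

Lemma F_monotone x y x' y' : 0 <= x -> 0 <= y' -> x <= x' -> y' <= y ->
  F x y theta <= F x' y' theta.
Proof.
  intros; unfold F.
  assert ((1 + x) * y' <= (1 + x') * y) by (apply Rmult_le_compat; lra).
  (* cross-multiplied, the difference of the two sides is exactly (1 - theta) ((1 + x') y - (1 + x) y') *)
  assert (0 <= (1 - theta) * ((1 + x') * y - (1 + x) * y')) by (apply Rmult_le_pos; lra).
  apply Rmult_le_reg_r with ((1 + x + y) * (1 + x' + y')); [nra|].
  replace ((1 + x + theta * y) / (1 + x + y) * ((1 + x + y) * (1 + x' + y')))
    with ((1 + x + theta * y) * (1 + x' + y')) by (field; lra).
  replace ((1 + x' + theta * y') / (1 + x' + y') * ((1 + x + y) * (1 + x' + y')))
    with ((1 + x' + theta * y') * (1 + x + y)) by (field; lra).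
  nra.
Qed.

Definition G (x y : R) : R := lam * F x y theta ^ k.

Lemma G_gt0 x y : 0 <= x -> 0 <= y -> 0 < G x y.
Proof. intros. apply Rmult_lt_0_compat, pow_lt, F_gt0; auto. Qed.

Lemma G_le_lam x y : 0 <= x -> 0 <= y -> G x y <= lam.
Proof.
  intros. unfold G. rewrite <- (Rmult_1_r lam) at 2. rewrite <- (pow1 k).
  apply Rmult_le_compat_l; [lra|]. apply pow_incr.
  split; [left; apply F_gt0 | apply F_le1]; auto.
Qed.

Lemma G_monotone x y x' y' : 0 <= x -> 0 <= y' -> x <= x' -> y' <= y ->
  G x y <= G x' y'.
Proof.
  intros. apply Rmult_le_compat_l; [lra|]. apply pow_incr.
  split; [left; apply F_gt0; lra | apply F_monotone; auto].
Qed.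

Lemma is_lim_seq_G (u v : nat -> R) (a b : R) :
  0 <= a -> 0 <= b -> is_lim_seq u a -> is_lim_seq v b ->
  is_lim_seq (fun m => G (u m) (v m)) (G a b).
Proof.
  intros. unfold G, F.
  apply (is_lim_seq_scal_l _ lam (Finite _)), is_lim_seq_pow.
  apply is_lim_seq_div'; [| |lra].
  - apply is_lim_seq_plus'; [apply is_lim_seq_plus'; [apply is_lim_seq_const|auto]|].
    apply (is_lim_seq_scal_l _ theta (Finite b)); auto.
  - apply is_lim_seq_plus'; auto. apply is_lim_seq_plus'; auto. apply is_lim_seq_const.
Qed.

Lemma lim_recurrence_G (u v w : nat -> R) (a b c : R) :
  (forall m, w (S m) = G (u m) (v m)) -> 0 <= a -> 0 <= b ->
  is_lim_seq u a -> is_lim_seq v b -> is_lim_seq w c -> c = G a b.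
Proof.
  intros E ha hb hu hv hw.
  apply is_lim_seq_incr_1 in hw.
  assert (hG : is_lim_seq (fun m => w (S m)) (G a b)).
  { apply (is_lim_seq_ext (fun m => G (u m) (v m))); [intro m; now rewrite E|].
    apply is_lim_seq_G; auto. }
  apply is_lim_seq_unique in hw. rewrite (is_lim_seq_unique _ _ hG) in hw.
  now injection hw.
Qed.

(* (L1 n, U1 n, L2 n, U2 n): lower and upper bound for the first coordinate, then for the second. *)
Fixpoint bounds (n : nat) : R * R * R * R :=
  match n with
  | O => (0, lam, 0, lam)
  | S n => let '(l1, u1, l2, u2) := bounds n in (G l1 u2, G u1 l2, G l2 u1, G u2 l1)
  end.

Definition L1 n := fst (fst (fst (bounds n))).
Definition U1 n := snd (fst (fst (bounds n))).
Definition L2 n := snd (fst (bounds n)).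
Definition U2 n := snd (bounds n).

Lemma bounds_S n :
  L1 (S n) = G (L1 n) (U2 n) /\ U1 (S n) = G (U1 n) (L2 n) /\
  L2 (S n) = G (L2 n) (U1 n) /\ U2 (S n) = G (U2 n) (L1 n).
Proof. unfold L1, U1, L2, U2; simpl. destruct (bounds n) as [[[a b] c] d]; auto. Qed.

Lemma bounds_nonneg n : 0 <= L1 n /\ 0 <= U1 n /\ 0 <= L2 n /\ 0 <= U2 n.
Proof.
  induction n as [|n IH]; [unfold L1, U1, L2, U2; simpl; lra|].
  destruct (bounds_S n) as (-> & -> & -> & ->).
  destruct IH as (h1 & h2 & h3 & h4).
  repeat split; left; apply G_gt0; auto.
Qed.

Lemma lower_bounds_le_lam n : L1 n <= lam /\ L2 n <= lam.
Proof.
  destruct n as [|n]; [unfold L1, L2; simpl; lra|].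
  destruct (bounds_S n) as (-> & _ & -> & _).
  destruct (bounds_nonneg n) as (h1 & h2 & h3 & h4).
  split; apply G_le_lam; auto.
Qed.

Lemma bounds_monotone n :
  L1 n <= L1 (S n) /\ U1 (S n) <= U1 n /\ L2 n <= L2 (S n) /\ U2 (S n) <= U2 n.
Proof.
  induction n as [|n IH].
  - destruct (bounds_S 0) as (-> & -> & -> & ->).
    destruct (bounds_nonneg 0) as (h1 & h2 & h3 & h4).
    unfold L1, U1, L2, U2; simpl.
    repeat split; try (left; apply G_gt0; lra); apply G_le_lam; lra.
  - destruct (bounds_S n) as (e1 & e2 & e3 & e4).
    destruct (bounds_S (S n)) as (-> & -> & -> & ->).
    pose proof (bounds_nonneg n); pose proof (bounds_nonneg (S n)).
    repeat split;
      [rewrite e1 at 1 | rewrite e2 at 2 | rewrite e3 at 1 | rewrite e4 at 2];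
      apply G_monotone; tauto.
Qed.

Lemma bounds_limits_solve_sys4 : exists l1 u1 l2 u2 : R,
  is_lim_seq L1 l1 /\ is_lim_seq U1 u1 /\ is_lim_seq L2 l2 /\ is_lim_seq U2 u2 /\
  sys4_pos_sol k lam theta l1 u1 l2 u2.
Proof.
  assert (HL1 : ex_finite_lim_seq L1).
  { apply (ex_finite_lim_seq_incr _ lam); intro n;
      [apply bounds_monotone | apply lower_bounds_le_lam]. }
  assert (HL2 : ex_finite_lim_seq L2).
  { apply (ex_finite_lim_seq_incr _ lam); intro n;
      [apply bounds_monotone | apply lower_bounds_le_lam]. }
  assert (HU1 : ex_finite_lim_seq U1).
  { apply (ex_finite_lim_seq_decr _ 0); intro n; [apply bounds_monotone | apply bounds_nonneg]. }
  assert (HU2 : ex_finite_lim_seq U2).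
  { apply (ex_finite_lim_seq_decr _ 0); intro n; [apply bounds_monotone | apply bounds_nonneg]. }
  destruct HL1 as [l1 H1], HU1 as [u1 H2], HL2 as [l2 H3], HU2 as [u2 H4].
  assert (n1 : 0 <= l1) by (apply (is_lim_seq_nonneg L1); auto; apply bounds_nonneg).
  assert (n2 : 0 <= u1) by (apply (is_lim_seq_nonneg U1); auto; apply bounds_nonneg).
  assert (n3 : 0 <= l2) by (apply (is_lim_seq_nonneg L2); auto; apply bounds_nonneg).
  assert (n4 : 0 <= u2) by (apply (is_lim_seq_nonneg U2); auto; apply bounds_nonneg).
  assert (e1 : l1 = G l1 u2) by (apply (lim_recurrence_G L1 U2 L1); auto; apply bounds_S).
  assert (e2 : u1 = G u1 l2) by (apply (lim_recurrence_G U1 L2 U1); auto; apply bounds_S).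
  assert (e3 : l2 = G l2 u1) by (apply (lim_recurrence_G L2 U1 L2); auto; apply bounds_S).
  assert (e4 : u2 = G u2 l1) by (apply (lim_recurrence_G U2 L1 U2); auto; apply bounds_S).
  exists l1, u1, l2, u2. unfold sys4_pos_sol.
  repeat split; auto; [rewrite e1 | rewrite e2 | rewrite e3 | rewrite e4]; apply G_gt0; auto.
Qed.

Lemma tree_value_between (z1 z2 : list nat -> R) (i : list nat) (a1 b1 a2 b2 : R) :
  tree_pos_sol k lam theta z1 z2 -> is_vertex k i -> 0 <= a1 -> 0 <= a2 ->
  (forall j, (j < k)%nat ->
     a1 <= z1 (i ++ [j]) <= b1 /\ a2 <= z2 (i ++ [j]) <= b2) ->
  G a1 b2 <= z1 i <= G b1 a2 /\ G a2 b1 <= z2 i <= G b2 a1.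
Proof.
  intros T Hi ha1 ha2 Hsucc.
  destruct (T i Hi) as (_ & _ & e1 & e2).
  unfold G. rewrite <- !prod_succ_const, e1, e2.
  assert (HFlo : forall x y lo hi, 0 <= lo -> lo <= x -> 0 <= y <= hi ->
            0 <= F lo hi theta <= F x y theta).
  { intros. split; [left; apply F_gt0 | apply F_monotone]; lra. }
  assert (HFhi : forall x y hi lo, 0 <= x <= hi -> 0 <= lo <= y ->
            0 <= F x y theta <= F hi lo theta).
  { intros. split; [left; apply F_gt0 | apply F_monotone]; lra. }
  repeat split; apply Rmult_le_compat_l; try lra; apply prod_succ_le; intros j Hj;
    destruct (Hsucc j Hj); [apply HFlo | apply HFhi | apply HFlo | apply HFhi]; lra.
Qed.

Lemma tree_sol_le_lam (z1 z2 : list nat -> R) (i : list nat) :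
  tree_pos_sol k lam theta z1 z2 -> is_vertex k i -> z1 i <= lam /\ z2 i <= lam.
Proof.
  intros T Hi. destruct (T i Hi) as (_ & _ & -> & ->).
  assert (HF : forall x y, 0 <= x -> 0 <= y -> 0 <= F x y theta <= 1).
  { intros. split; [left; apply F_gt0 | apply F_le1]; auto. }
  rewrite <- (Rmult_1_r lam) at 2 4. rewrite <- (pow1 k), <- prod_succ_const.
  split; apply Rmult_le_compat_l; try lra; apply prod_succ_le; intros j Hj;
    destruct (T _ (is_vertex_succ k i j Hi Hj)) as (q1 & q2 & _); apply HF; lra.
Qed.

Lemma tree_sol_between_bounds (z1 z2 : list nat -> R) :
  tree_pos_sol k lam theta z1 z2 -> forall n i, is_vertex k i ->
  L1 n <= z1 i <= U1 n /\ L2 n <= z2 i <= U2 n.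
Proof.
  intros T n. induction n as [|n IH]; intros i Hi.
  - destruct (T i Hi) as (p1 & p2 & _).
    destruct (tree_sol_le_lam z1 z2 i T Hi).
    unfold L1, U1, L2, U2; simpl; lra.
  - destruct (bounds_S n) as (-> & -> & -> & ->).
    destruct (bounds_nonneg n) as (h1 & _ & h3 & _).
    apply tree_value_between; auto.
    intros j Hj. apply IH, is_vertex_succ; auto.
Qed.

End Iteration.

Lemma sys4_pos_sol_swap (k : nat) (lam theta a b c d : R) :
  sys4_pos_sol k lam theta a b c d -> sys4_pos_sol k lam theta b a d c.
Proof. unfold sys4_pos_sol; tauto. Qed.

Lemma sys4_pos_sol_of_sys2 (k : nat) (lam theta x y : R) :
  sys2_pos_sol k lam theta x y -> sys4_pos_sol k lam theta x x y y.
Proof. unfold sys2_pos_sol, sys4_pos_sol; tauto. Qed.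

Lemma tree_pos_sol_const (k : nat) (lam theta x y : R) :
  sys2_pos_sol k lam theta x y -> tree_pos_sol k lam theta (fun _ => x) (fun _ => y).
Proof. intros Hs i _. rewrite !prod_succ_const. exact Hs. Qed.

Theorem mainTheorem14 (k : nat) (lam theta : R)
  (hk : (1 <= k)%nat) (hlam : 0 < lam) (htheta0 : 0 < theta) (htheta1 : theta < 1)
  (huniq4 : exists a b c d, sys4_pos_sol k lam theta a b c d /\
     forall a' b' c' d', sys4_pos_sol k lam theta a' b' c' d' ->
       a' = a /\ b' = b /\ c' = c /\ d' = d) :
  exists x y : R,
    sys2_pos_sol k lam theta x y /\
    (forall x' y', sys2_pos_sol k lam theta x' y' -> x' = x /\ y' = y) /\
    tree_pos_sol k lam theta (fun _ => x) (fun _ => y) /\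
    (forall z1 z2 : list nat -> R, tree_pos_sol k lam theta z1 z2 ->
       forall i, is_vertex k i -> z1 i = x /\ z2 i = y).
Proof.
  destruct huniq4 as (a & b & c & d & _ & Hu).
  assert (htheta : 0 <= theta <= 1) by lra.
  destruct (bounds_limits_solve_sys4 k lam theta hlam (proj1 htheta) (proj2 htheta))
    as (l1 & u1 & l2 & u2 & HL1 & HU1 & HL2 & HU2 & Hsol).
  destruct (Hu _ _ _ _ Hsol) as (El1 & _ & El2 & _).
  destruct (Hu _ _ _ _ (sys4_pos_sol_swap _ _ _ _ _ _ _ Hsol)) as (Eu1' & _ & Eu2' & _).
  assert (u1 = l1 /\ u2 = l2) as [-> ->] by (split; congruence).
  assert (Hsys2 : sys2_pos_sol k lam theta l1 l2) by (unfold sys4_pos_sol, sys2_pos_sol in *; tauto).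
  exists l1, l2. split; [exact Hsys2 | split; [| split]].
  - intros x y Hxy.
    destruct (Hu _ _ _ _ (sys4_pos_sol_of_sys2 _ _ _ _ _ Hxy)) as (Ex & _ & Ey & _).
    split; congruence.
  - apply tree_pos_sol_const, Hsys2.
  - intros z1 z2 T i Hi.
    pose proof (tree_sol_between_bounds k lam theta hlam (proj1 htheta) (proj2 htheta)
                  z1 z2 T) as Hb.
    split; [apply (is_lim_seq_squeeze_const (L1 k lam theta) (U1 k lam theta))
           | apply (is_lim_seq_squeeze_const (L2 k lam theta) (U2 k lam theta))];
      auto; intro n; apply (Hb n i Hi).
Qed.
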